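(* Let $P$ satisfy (S1)–(S4). Let $i_1<\dots<i_\ell$ be integers and let $\bar h=(h_{i_1})_{i_1}\cdots(h_{i_\ell})_{i_\ell}\in H$ with all $h_{i_j}\ne1$. If $\bar h$ is a $[k,t]$-commutator for some integer $k\neq0$ (resp. a $[\pm,t]$-commutator), then $\bar h'=(h_{i_1})_1(h_{i_2})_2\cdots(h_{i_\ell})_\ell$ is also a $[k,t]$-commutator (resp. a $[\pm,t]$-commutator).
   Context: Conditions on a finite group $P$: (S1) for all $a_1,a_2\in P$ there are $x,y$ with $a_2=x^{-1}a_1^{-1}yxy^{-1}$; (S2) for all $a_1,a_2,a_3$ there are $u,v$ with $a_2=a_3ua_1^{-1}a_3^{-1}vu^{-1}v^{-1}$; (S3) for all $u_1,u_2,u_3,u_4\ne1$ there are $x,y,z$ with $u_4=x^{-1}u_1xy^{-1}u_2yz^{-1}u_3z$; (S4) there are $u_1,u_2,u_3\ne1$ such that there are no $x,y$ with $u_3=x^{-1}u_2^{-1}xy^{-1}u_1^{-1}y$. $H=\bigoplus_{i\in\mathbb Z}H_i$, each $H_i$ a copy of $P$, elements finitely supported sequences; $(h)_j$ is the element with $h$ at coordinate $j$ and $1$ elsewhere, and juxtaposition is the product in $H$. $\alpha((h_i)_i)=(h_{i+1})_i$. For $k>0$, $\bar h$ is a $[k,t]$-commutator if $\bar h=\bar g_1\alpha(\bar g_1^{-1})\cdots\bar g_k\alpha(\bar g_k^{-1})$ for some $\bar g_i\in H$; for $k<0$, if $\bar h=\alpha(\bar g_1)\bar g_1^{-1}\cdots\alpha(\bar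 g_{|k|})\bar g_{|k|}^{-1}$ for some $\bar g_i\in H$. $\bar h$ is a $[\pm,t]$-commutator if $\bar h=\bar g_1\alpha(\bar g_1^{-1})\alpha(\bar g_2)\bar g_2^{-1}$ or $\bar h=\alpha(\bar g_1)\bar g_1^{-1}\bar g_2\alpha(\bar g_2^{-1})$ for some $\bar g_1,\bar g_2\in H$. *)

From Stdlib Require List.
From mathcomp Require Import all_boot all_order all_algebra all_fingroup.
Set Implicit Arguments. Unset Strict Implicit. Unset Printing Implicit Defensive.
Import GRing.Theory Num.Theory.

Local Open Scope group_scope.

Section Defs.
Variable gT : finGroupType.

(* Conditions (S1)-(S4) on the finite group P (= all of gT). *)
Definition S1 : Prop := forall a1 a2 : gT,
  exists x y : gT, a2 = x^-1 * a1^-1 * y * x * y^-1.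
Definition S2 : Prop := forall a1 a2 a3 : gT,
  exists u v : gT, a2 = a3 * u * a1^-1 * a3^-1 * v * u^-1 * v^-1.
Definition S3 : Prop := forall u1 u2 u3 u4 : gT,
  u1 != 1 -> u2 != 1 -> u3 != 1 -> u4 != 1 ->
  exists x y z : gT, u4 = x^-1 * u1 * x * y^-1 * u2 * y * z^-1 * u3 * z.
Definition S4 : Prop := exists u1 u2 u3 : gT,
  [/\ u1 != 1, u2 != 1, u3 != 1 &
   ~ exists x y : gT, u3 = x^-1 * u2^-1 * x * y^-1 * u1^-1 * y].

(* Elements of H = (+)_{i in Z} P are finitely supported functions int -> gT. *)
Definition finsupp (f : int -> gT) : Prop :=
  exists N : nat, forall i : int, (N < `|i|)%N -> f i = 1.

Definition Hone : int -> gT := fun _ => 1.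
Definition Hmul (f g : int -> gT) : int -> gT := fun i => f i * g i.
Definition Hinv (f : int -> gT) : int -> gT := fun i => (f i)^-1.
Definition Halpha (f : int -> gT) : int -> gT := fun i => f (i + 1)%R.
Definition Hsingle (h : gT) (j : int) : int -> gT :=
  fun i => if i == j then h else 1.
Definition Hprod (s : seq (int -> gT)) : int -> gT := foldr Hmul Hone s.

(* [k,t]-commutator, k an integer (meaningful for k <> 0) *)
Definition kt_comm (k : int) (h : int -> gT) : Prop :=
  exists gs : seq (int -> gT),
    [/\ size gs = `|k|%N, (forall g, List.In g gs -> finsupp g) &
     h = Hprod [seq (if (0 < k)%R then Hmul g (Halpha (Hinv g))
                     else Hmul (Halpha g) (Hinv g)) | g <- gs]].

Definition pm_comm (h : int -> gT) : Prop :=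
  exists g1 g2 : int -> gT, [/\ finsupp g1, finsupp g2 &
    h = Hmul (Hmul g1 (Halpha (Hinv g1))) (Hmul (Halpha g2) (Hinv g2)) \/
    h = Hmul (Hmul (Halpha g1) (Hinv g1)) (Hmul g2 (Halpha (Hinv g2)))].
End Defs.

(* A [1,t]-commutator h = g α(g^-1) is a finitely supported h with
   h_i = g_i g_(i+1)^-1 for a finitely supported "potential" g; the other
   kinds of commutators are of the same shape h_i = F (s_i) (s_(i+1)), with
   s = g or s = (g1, g2). For each such step F there is a class function K
   with F x y = 1 -> K x = K y and such that F x y depends on one argument
   only through its class. So the class of the potential is constant along
   every run where h is trivial, and restricting the potential to a strictly
   increasing map of Z whose image contains the support of h gives a
   potential for the compressed element. For |k| >= 2 nothing needs to be
   transferred: a finitely supported element with trivial ordered product is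
   a [1,t]-commutator, and (S1) writes any element as a product of two such. *)

From mathcomp Require Import all_boot all_order all_algebra all_fingroup.
From mathcomp Require Import zify.
From Stdlib Require Import FunctionalExtensionality.
Import Order.TTheory GRing.Theory Num.Theory.
Set Implicit Arguments. Unset Strict Implicit. Unset Printing Implicit Defensive.

Section IncreasingInt.
Local Open Scope ring_scope.
Variable f : int -> int.
Hypothesis f_step : forall i, f i < f (i + 1).

Lemma incr_addn i (n : nat) : f i + n%:Z <= f (i + n%:Z).
Proof.
elim: n => [|n IHn]; first by rewrite !addr0.
have -> : i + n.+1%:Z = i + n%:Z + 1 by lia.
have := f_step (i + n%:Z); lia.
Qed.

Lemma incr_homo : {homo f : i j / i < j}.
Proof.
move=> i j lt_ij; have := incr_addn i `|j - i|%N.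
by rewrite (_ : i + _ = j); lia.
Qed.

Lemma incr_mono : {mono f : i j / i < j}.
Proof. exact/leW_mono/le_mono/incr_homo. Qed.

Lemma finsupp_comp_incr (gT : finGroupType) (g : int -> gT) :
  finsupp g -> finsupp (g \o f).
Proof.
case=> N gN; exists (N + `|f 0|)%N => i Ni /=; apply: gN.
case: (lerP 0 i) => i_sgn.
  have := incr_addn 0 `|i|; rewrite (_ : 0 + _ = i); lia.
have := incr_addn i `|i|; rewrite (_ : i + _ = 0); lia.
Qed.
End IncreasingInt.

Local Open Scope group_scope.

Section Potential.
Variables (gT : finGroupType) (S T : Type) (K : S -> T) (F : S -> S -> gT).

Definition potential (s : int -> S) (h : int -> gT) : Prop :=
  forall i, h i = F (s i) (s (i + 1)%R).

Hypothesis F_K : forall x y, F x y = 1 -> K x = K y.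
Variables (s : int -> S) (h : int -> gT).
Hypothesis s_h : potential s h.

Lemma potential_class_addn a (n : nat) :
  (forall i, (a <= i < a + n%:Z)%R -> h i = 1) -> K (s a) = K (s (a + n%:Z)%R).
Proof.
elim: n => [|n IHn] h1; first by rewrite addr0.
rewrite IHn => [|i i_in]; last by apply: h1; lia.
have -> : (a + n.+1%:Z = a + n%:Z + 1)%R by lia.
by apply: F_K; rewrite -s_h; apply: h1; lia.
Qed.

Lemma potential_class_const a b : (a <= b)%R ->
  (forall i, (a <= i < b)%R -> h i = 1) -> K (s a) = K (s b).
Proof.
move=> le_ab h1; have Eb : b = (a + `|b - a|%N%:Z)%R by lia.
by rewrite Eb; apply: potential_class_addn; rewrite -Eb.
Qed.

Variable phi : int -> int.
Hypothesis phi_step : forall i, (phi i < phi (i + 1))%R.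
Hypothesis supp_phi : forall m, h m != 1 -> exists i, phi i = m.

Lemma trivial_between i m : (phi i < m < phi (i + 1))%R -> h m = 1.
Proof.
move=> m_in; apply/eqP; apply: contraT => /supp_phi [j phi_j].
by move: m_in; rewrite -phi_j !(incr_mono phi_step); lia.
Qed.

Lemma potential_class_gap i : K (s (phi i + 1)%R) = K (s (phi (i + 1))).
Proof.
apply: potential_class_const => [|m m_in]; first by have := phi_step i; lia.
by apply: (@trivial_between i); lia.
Qed.

Lemma potential_compress_r :
  (forall x y y', K y = K y' -> F x y = F x y') -> potential (s \o phi) (h \o phi).
Proof. by move=> F_r i /=; rewrite s_h; apply: F_r; apply: potential_class_gap. Qed.

Lemma potential_compress_l :
  (forall x x' y, K x = K x' -> F x y = F x' y) ->
  potential (fun i => s (phi (i - 1) + 1)%R) (h \o phi).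
Proof.
move=> F_l i /=; rewrite s_h addrK; apply: F_l.
by rewrite (potential_class_gap (i - 1)) subrK.
Qed.
End Potential.

Section SuffixProduct.
Variables (gT : finGroupType) (c : int -> gT).

Definition suffix_prod (a : int) (M : nat) (i : int) : gT :=
  \prod_(j < M) (if (i <= a + j%:Z)%R then c (a + j%:Z)%R else 1).

Lemma suffix_prodS a M i :
  suffix_prod a M.+1 i = (if (i <= a)%R then c a else 1) * suffix_prod (a + 1)%R M i.
Proof.
rewrite /suffix_prod big_ord_recl addr0; congr (_ * _); apply: eq_bigr => j _.
by rewrite (_ : (a + (lift ord0 j : nat)%:Z = a + 1 + j%:Z)%R) // lift0; lia.
Qed.

Lemma suffix_prod_below a M i :
  (i <= a)%R -> suffix_prod a M i = \prod_(j < M) c (a + j%:Z)%R.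
Proof. by move=> le_ia; apply: eq_bigr => j _; rewrite ifT //; lia. Qed.

Lemma suffix_prod_above a M i : (a + M%:Z <= i)%R -> suffix_prod a M i = 1.
Proof. by move=> le_i; apply: big1 => j _; rewrite ifF //; have := ltn_ord j; lia. Qed.

Lemma suffix_prod_step a M i :
  (a <= i < a + M%:Z)%R -> suffix_prod a M i = c i * suffix_prod a M (i + 1)%R.
Proof.
elim: M a => [|M IHM] a i_in; first by lia.
rewrite !suffix_prodS (_ : (i + 1 <= a)%R = false); last by lia.
have [-> | ne_ia] := eqVneq i a.
  by rewrite lexx mul1g !suffix_prod_below //; lia.
by rewrite ifF ?mul1g ?IHM //; lia.
Qed.

Lemma window_prod1_potential a M :
  (forall i, c i != 1 -> (a <= i < a + M%:Z)%R) ->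
  \prod_(j < M) c (a + j%:Z)%R = 1 ->
  exists2 g, finsupp g & potential (fun x y => x * y^-1) g c.
Proof.
move=> c_supp c_prod1; exists (suffix_prod a M).
  exists (`|a| + M)%N => i i_far.
  have [lt_ia | le_ai] := ltrP i a; last by rewrite suffix_prod_above //; lia.
  by rewrite suffix_prod_below //; lia.
move=> i; have [i_in | i_out] := boolP (a <= i < a + M%:Z)%R.
  by rewrite suffix_prod_step ?mulgK.
have ci1 : c i = 1 by apply/eqP; apply: contraNT i_out => /c_supp.
have [lt_ia | le_ai] := ltrP i a.
  by rewrite ci1 !suffix_prod_below ?c_prod1 ?invg1 ?mulg1 //; lia.
by rewrite ci1 !suffix_prod_above ?invg1 ?mulg1 //; lia.
Qed.
End SuffixProduct.

Lemma prod_window_split (gT : finGroupType) (c : int -> gT) (N : nat) :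
  \prod_(j < 2 * N + 4) c (- N%:Z - 2 + j%:Z)%R =
  c (- N%:Z - 2)%R * c (- N%:Z - 1)%R *
  \prod_(j < 2 * N + 1) c (- N%:Z + j%:Z)%R * c (N%:Z + 1)%R.
Proof.
rewrite (_ : (2 * N + 4 = (2 * N + 1).+3)%N); last by lia.
rewrite 2!big_ord_recl big_ord_recr /= !mulgA.
congr (_ * _ * _ * _); rewrite /bump /=; try (congr c; lia).
by apply: eq_bigr => j _; congr c; rewrite /bump /=; lia.
Qed.

(* Write the ordered product of the entries of h as x^-1 y x y^-1 by (S1) and
   let c1 be y, x^-1, x y^-1 at three points around the support of h: both c1
   and c1^-1 h have trivial ordered product. *)
Lemma finsupp_potential_div2 (gT : finGroupType) (hS1 : S1 gT) (h : int -> gT) :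
  finsupp h -> exists g1 g2, [/\ finsupp g1, finsupp g2 &
    forall i, h i = (g1 i * (g1 (i + 1)%R)^-1) * (g2 i * (g2 (i + 1)%R)^-1)].
Proof.
move=> [N hN].
have h_supp i : h i != 1 -> (- N%:Z <= i <= N%:Z)%R.
  by move=> hi1; apply: contraNT hi1 => i_out; apply/eqP/hN; lia.
have [x [y Pxy]] := hS1 1 (\prod_(j < 2 * N + 1) h (- N%:Z + j%:Z)%R).
pose c1 i := if i == (- N%:Z - 2)%R then y else if i == (- N%:Z - 1)%R then x^-1
   else if i == (N%:Z + 1)%R then x * y^-1 else 1.
have c1_p1 : c1 (- N%:Z - 2)%R = y by rewrite /c1 eqxx.
have c1_p2 : c1 (- N%:Z - 1)%R = x^-1.
  by rewrite /c1 (_ : (- N%:Z - 1 == - N%:Z - 2)%R = false) ?eqxx //; lia.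
have c1_q : c1 (N%:Z + 1)%R = x * y^-1.
  rewrite /c1 (_ : (N%:Z + 1 == - N%:Z - 2)%R = false); last by lia.
  by rewrite (_ : (N%:Z + 1 == - N%:Z - 1)%R = false) ?eqxx //; lia.
have c1_mid i : (- N%:Z <= i <= N%:Z)%R -> c1 i = 1.
  by move=> i_in; rewrite /c1 !ifF //; lia.
have c1_supp i : c1 i != 1 -> (- N%:Z - 2 <= i < - N%:Z - 2 + (2 * N + 4)%N%:Z)%R.
  by move=> c1i; apply: contraNT c1i => i_out; apply/eqP; rewrite /c1 !ifF //; lia.
have [g1 fin_g1 pot_g1] : exists2 g, finsupp g & potential (fun x y => x * y^-1) g c1.
  apply: (@window_prod1_potential _ c1 (- N%:Z - 2)%R (2 * N + 4)) => //.
  rewrite prod_window_split c1_p1 c1_p2 c1_q big1 ?mulg1 => [|j _]; last first.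
    by apply: c1_mid; have := ltn_ord j; lia.
  by rewrite mulgA mulgKV mulgV.
have [g2 fin_g2 pot_g2] :
    exists2 g, finsupp g & potential (fun x y => x * y^-1) g (fun i => (c1 i)^-1 * h i).
  apply: (@window_prod1_potential _ _ (- N%:Z - 2)%R (2 * N + 4)) => [i|].
    case: (eqVneq (c1 i) 1) => [-> | /c1_supp //]; rewrite invg1 mul1g => /h_supp; lia.
  rewrite (prod_window_split (fun i => (c1 i)^-1 * h i)) c1_p1 c1_p2 c1_q !hN; try lia.
  rewrite (eq_bigr (fun j : 'I_(2 * N + 1) => h (- N%:Z + j%:Z)%R)) => [|j _].
    by rewrite Pxy invg1 !mulg1 invMg invgK !mulgA !mulgK mulVg.
  by rewrite c1_mid ?invg1 ?mul1g //; have := ltn_ord j; lia.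
by exists g1, g2; split => // i; rewrite -pot_g1 -pot_g2 mulKVg.
Qed.

Section Singles.
Variables (gT : finGroupType) (l : nat) (hs : 'I_l -> gT) (pos : 'I_l -> int).

Lemma Hprod_singles_off (r : seq 'I_l) m : {in r, forall j, pos j != m} ->
  Hprod [seq Hsingle (hs j) (pos j) | j <- r] m = 1.
Proof.
elim: r => [|j r IHr] //= pos_r; rewrite /Hmul /Hsingle ifF ?mul1g.
  by rewrite IHr // => j' j'_r; apply: pos_r; rewrite inE j'_r orbT.
by apply/negbTE; rewrite eq_sym pos_r // mem_head.
Qed.

Lemma Hprod_singles_at (r : seq 'I_l) j : injective pos -> uniq r -> j \in r ->
  Hprod [seq Hsingle (hs j) (pos j) | j <- r] (pos j) = hs j.
Proof.
move=> pos_inj; elim: r => [|j' r IHr] //= /andP[j'_r r_uniq].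
rewrite /Hmul /Hsingle inE (inj_eq pos_inj) => /predU1P[->|j_r].
  by rewrite eqxx Hprod_singles_off ?mulg1 // => j'' j''_r; rewrite (inj_eq pos_inj);
     apply: contraNneq j'_r => <-.
by rewrite ifF ?mul1g ?IHr //; apply: contraNF j'_r => /eqP <-.
Qed.
End Singles.

Section Spread.
Local Open Scope ring_scope.
Variables (l : nat) (idx : 'I_l -> int).
Hypothesis idx_lt : forall j1 j2 : 'I_l, (j1 < j2)%N -> idx j1 < idx j2.

Definition spread_bound : nat := \max_(j < l) `|idx j|%N.

(* Sends j.+1 to idx j and pushes all other integers past the bound of the
   idx j, so that the map is strictly increasing. *)
Definition spread (i : int) : int :=
  match i with
  | Posz n.+1 =>
      if (insub n : option 'I_l) is Some j then idx j else i + spread_bound%:Z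
  | _ => i - spread_bound%:Z - 1
  end.

Lemma idx_bound j : `|idx j| <= spread_bound%:Z.
Proof. by rewrite -abszE lez_nat (leq_bigmax j). Qed.

Lemma spread_nonpos i : i <= 0 -> spread i = i - spread_bound%:Z - 1.
Proof. by case: i => [[|n]|n]. Qed.

Lemma spread_idx (j : 'I_l) : spread j.+1 = idx j.
Proof. by rewrite /spread valK. Qed.

Lemma spread_out (i : int) :
  (forall j : 'I_l, i != j.+1%:Z) -> spread_bound%:Z < `|spread i|.
Proof.
case: (lerP i 0) => [i_le0 _|]; first by rewrite spread_nonpos //; lia.
case: i => [[|n]|n] //= _ i_new; rewrite /spread; case: insubP => [j _ j_n|]; last by lia.
by move: (i_new j); rewrite j_n eqxx.
Qed.

Lemma spread_step i : spread i < spread (i + 1).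
Proof.
case: (ltrP i 0) => [i_lt0|]; first by rewrite !spread_nonpos //; lia.
case: i => [[|n]|n] //= _.
  rewrite add0r /spread; case: insubP => [j _ _|_]; last by lia.
  by have := idx_bound j; lia.
rewrite (_ : n.+1%:Z + 1 = n.+2%:Z) /spread; last by lia.
case: insubP => [j _ j_n|n_ge]; case: insubP => [j' _ j'_n|_].
- by apply: idx_lt; rewrite j_n j'_n addn1.
- by have := idx_bound j; lia.
- by have := valP j'; lia.
- by lia.
Qed.

Lemma spread_supp (gT : finGroupType) (hs : 'I_l -> gT) m :
  Hprod [seq Hsingle (hs j) (idx j) | j <- enum 'I_l] m != 1%g ->
  exists i, spread i = m.
Proof.
case: (pickP (fun j => idx j == m)) => [j /eqP <- _ | idx_m hm].
  by exists j.+1; apply: spread_idx.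
by move: hm; rewrite Hprod_singles_off ?eqxx // => j _; rewrite idx_m.
Qed.

Lemma singles_spread (gT : finGroupType) (hs : 'I_l -> gT) :
  Hprod [seq Hsingle (hs j) (Posz j.+1) | j <- enum 'I_l] =
  Hprod [seq Hsingle (hs j) (idx j) | j <- enum 'I_l] \o spread.
Proof.
have idx_inj : injective idx.
  by move=> j1 j2 E; case: (ltngtP j1 j2) => [/idx_lt|/idx_lt|/val_inj //]; rewrite E ltxx.
apply: functional_extensionality => i /=.
case: (pickP (fun j : 'I_l => i == j.+1%:Z)) => [j /eqP -> | i_new].
  rewrite spread_idx !Hprod_singles_at ?enum_uniq ?mem_enum //.
  by move=> j1 j2 [/val_inj].
have i_out (j : 'I_l) : i != j.+1%:Z by have /= -> := i_new j.
rewrite !Hprod_singles_off // => j _; last by rewrite eq_sym.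
by have := spread_out i_out; have := idx_bound j; lia.
Qed.
End Spread.

Section Commutators.
Variable gT : finGroupType.
Implicit Types (g h : int -> gT) (x y : gT) (u v : gT * gT).

Definition kt_step (k : int) x y : gT := if (0 < k)%R then x * y^-1 else y * x^-1.

Lemma kt_factorE k g i :
  (if (0 < k)%R then Hmul g (Halpha (Hinv g)) else Hmul (Halpha g) (Hinv g)) i =
  kt_step k (g i) (g (i + 1)%R).
Proof. by rewrite /kt_step; case: ifP. Qed.

Lemma kt_step_eq1 k x y : kt_step k x y = 1 -> x = y.
Proof. by rewrite /kt_step; case: ifP => _ /eqP; rewrite -eq_mulgV1 => /eqP. Qed.

Lemma kt_comm1P k h : `|k|%N = 1%N ->
  kt_comm k h <-> exists2 g, finsupp g & potential (kt_step k) g h.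
Proof.
move=> k1; rewrite /kt_comm k1; split.
  case=> gs [size_gs fin_gs ->]; case: gs size_gs fin_gs => [|g [|? ?]] // _ fin_g.
  exists g => [|i]; first by apply: fin_g; left.
  by rewrite /= /Hmul /Hone kt_factorE mulg1.
case=> g fin_g g_h; exists [:: g]; split=> //= [_ [<-|] // | ].
by apply: functional_extensionality => i; rewrite /Hmul /Hone kt_factorE mulg1.
Qed.

Definition pm_class u : gT := u.1^-1 * u.2.
Definition pm_step_r u v : gT := (u.1 * v.1^-1) * (v.2 * u.2^-1).
Definition pm_step_l u v : gT := (v.1 * u.1^-1) * (u.2 * v.2^-1).

Lemma pm_commP h : pm_comm h <-> exists g1 g2, [/\ finsupp g1, finsupp g2 &
  potential pm_step_r (fun i => (g1 i, g2 i)) h \/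
  potential pm_step_l (fun i => (g1 i, g2 i)) h].
Proof.
split=> -[g1 [g2 [fin_g1 fin_g2 g_h]]]; exists g1, g2; split=> //.
  by case: g_h => ->; [left | right].
by case: g_h => g_h; [left | right]; apply: functional_extensionality.
Qed.

Lemma mul_conj_eq1 x y z : x * z * y^-1 = 1 -> z = x^-1 * y.
Proof. by move=> E; apply: (mulgI x); rewrite mulKVg -[y]mul1g -E mulgKV. Qed.

Lemma pm_step_rE u v : pm_step_r u v = u.1 * pm_class v * u.2^-1.
Proof. by rewrite /pm_step_r /pm_class !mulgA. Qed.

Lemma pm_step_lE u v : pm_step_l u v = v.1 * pm_class u * v.2^-1.
Proof. by rewrite /pm_step_l /pm_class !mulgA. Qed.

Lemma pm_step_r_eq1 u v : pm_step_r u v = 1 -> pm_class u = pm_class v.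
Proof. by rewrite pm_step_rE => /mul_conj_eq1. Qed.

Lemma pm_step_l_eq1 u v : pm_step_l u v = 1 -> pm_class u = pm_class v.
Proof. by rewrite pm_step_lE => /mul_conj_eq1. Qed.
End Commutators.

Section Compression.
Variables (gT : finGroupType) (phi : int -> int) (h : int -> gT).
Hypothesis phi_step : forall i, (phi i < phi (i + 1))%R.
Hypothesis supp_phi : forall m, h m != 1 -> exists i, phi i = m.

Lemma kt_comm1_compress k : `|k|%N = 1%N -> kt_comm k h -> kt_comm k (h \o phi).
Proof.
move=> k1 /(kt_comm1P _ k1) [g fin_g g_h]; apply/(kt_comm1P _ k1).
exists (g \o phi); first exact: finsupp_comp_incr.
apply: (potential_compress_r (K := id) (@kt_step_eq1 _ k) g_h phi_step supp_phi).
by move=> x y y' ->.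
Qed.

Lemma pm_comm_compress : pm_comm h -> pm_comm (h \o phi).
Proof.
case/pm_commP=> g1 [g2 [fin_g1 fin_g2 [g_h | g_h]]]; apply/pm_commP.
  exists (g1 \o phi), (g2 \o phi); split; try exact: finsupp_comp_incr.
  left; apply: (potential_compress_r (@pm_step_r_eq1 _) g_h phi_step supp_phi).
  by move=> u v v' Ev; rewrite !pm_step_rE Ev.
pose psi i := (phi (i - 1) + 1)%R.
have psi_step i : (psi i < psi (i + 1))%R.
  by rewrite /psi addrK ltrD2r; have := phi_step (i - 1); rewrite subrK.
exists (g1 \o psi), (g2 \o psi); split; try exact: finsupp_comp_incr.
right; apply: (potential_compress_l (@pm_step_l_eq1 _) g_h phi_step supp_phi).
by move=> u u' v Eu; rewrite !pm_step_lE Eu.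
Qed.
End Compression.

Lemma finsupp_Hinv (gT : finGroupType) (h : int -> gT) : finsupp h -> finsupp (Hinv h).
Proof. by case=> N hN; exists N => i Ni; rewrite /Hinv hN ?invg1. Qed.

Lemma In_nseq (T : Type) (x y : T) n : List.In x (nseq n y) -> x = y.
Proof. by elim: n => [|n IHn] //= [-> | /IHn]. Qed.

Lemma kt_comm_ge2 (gT : finGroupType) (hS1 : S1 gT) (h : int -> gT) k :
  finsupp h -> (1 < `|k|)%N -> kt_comm k h.
Proof.
move=> fin_h k_ge2.
have [g1 [g2 [fin_g1 fin_g2 g_h]]] : exists g1 g2, [/\ finsupp g1, finsupp g2 &
    forall i, h i = kt_step k (g1 i) (g1 (i + 1)%R) * kt_step k (g2 i) (g2 (i + 1)%R)].
  have [k_gt0 | k_le0] := boolP (0 < k)%R.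
    have [g1 [g2 [fin_g1 fin_g2 g_h]]] := finsupp_potential_div2 hS1 fin_h.
    by exists g1, g2; split=> // i; rewrite /kt_step k_gt0.
  have [g2 [g1 [fin_g2 fin_g1 g_h]]] := finsupp_potential_div2 hS1 (finsupp_Hinv fin_h).
  exists g1, g2; split=> // i; apply: invg_inj; rewrite /kt_step (negbTE k_le0).
  by move: (g_h i); rewrite /Hinv => ->; rewrite !invMg !invgK.
exists [:: g1, g2 & nseq (`|k| - 2) (@Hone gT)]; split.
- by rewrite /= size_nseq; lia.
- move=> g [<- | [<- | g_in]] //; rewrite (In_nseq g_in); by exists 0%N.
have pad n : Hprod [seq (if (0 < k)%R then Hmul g (Halpha (Hinv g))
                    else Hmul (Halpha g) (Hinv g)) | g <- nseq n (@Hone gT)] = @Hone gT.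
  elim: n => [|n IHn] //=; rewrite IHn.
  apply: functional_extensionality => i.
  by rewrite /Hmul /Hone /Halpha /Hinv invg1 !mulg1; case: ifP.
by apply: functional_extensionality => i; rewrite /= pad /Hmul /Hone !kt_factorE mulg1 g_h.
Qed.

Theorem lemma4p8 (gT : finGroupType)
  (hS1 : S1 gT) (hS2 : S2 gT) (hS3 : S3 gT) (hS4 : S4 gT)
  (l : nat) (idx : 'I_l -> int) (hs : 'I_l -> gT)
  (hidx : forall j1 j2 : 'I_l, (j1 < j2)%N -> (idx j1 < idx j2)%R)
  (hne : forall j : 'I_l, hs j != 1) :
  let hbar := Hprod [seq Hsingle (hs j) (idx j) | j <- enum 'I_l] in
  let hbar' := Hprod [seq Hsingle (hs j) (Posz j.+1) | j <- enum 'I_l] in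
  (forall k : int, k != 0%R -> kt_comm k hbar -> kt_comm k hbar') /\
  (pm_comm hbar -> pm_comm hbar').
Proof.
move=> hbar hbar'.
have fin_hbar' : finsupp hbar'.
  exists l => i i_far; apply: Hprod_singles_off => j _.
  by apply/eqP => ij; have := ltn_ord j; lia.
have step := spread_step hidx.
have supp := @spread_supp _ idx _ hs.
have hbar'E : hbar' = hbar \o spread idx := singles_spread hidx hs.
split=> [k k_neq0 hbar_k | ]; last by rewrite hbar'E; apply: pm_comm_compress.
have [k1 | k_ne1] := eqVneq `|k|%N 1%N.
  by rewrite hbar'E; apply: kt_comm1_compress.
by apply: kt_comm_ge2; rewrite // ltn_neqAle eq_sym k_ne1 absz_gt0.
Qed.
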